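(* Every point of $(G/H,\langle\cdot,\cdot\rangle_2)$ is mapped by some isometry of $(G/H,\langle\cdot,\cdot\rangle_2)$ to a point $\pi(g',e)=g'^{-1}H$ with $g'\in\mathcal F$.
   Context: Let $\mathbb{O}=\mathbb{H}\oplus\mathbb{H}\ell$ be the octonions with multiplication $(a+b\ell)(c+d\ell)=(ac-\bar d b)+(da+b\bar c)\ell$. Equip $\operatorname{Im}\mathbb{O}$ with the ordered orthonormal basis $(i,j,k,\ell,i\ell,j\ell,k\ell)$; all matrices are written in this basis. Let $G=G_2=\operatorname{Aut}(\mathbb{O})\subseteq SO(7)$, $K=\{g\in G: g(i)=i\}\cong SU(3)$, $H=\{g\in G: g\text{ preserves the oriented plane with oriented basis }(j,k)\}\cong U(2)$. Let $\mathfrak g\supseteq\mathfrak k$ be Lie algebras, $\langle X,Y\rangle_0=-\operatorname{tr}(XY)$, $\mathfrak p=\mathfrak k^{\perp}$, fix $t>0$, $\phi(Y)=\frac{t}{t+1}Y_{\mathfrak k}+Y_{\mathfrak p}$, and let $\langle\cdot,\cdot\rangle_1$ be the left-invariant metric with $\langle X,Y\rangle_1=\langle X,\phi(Y)\rangle_0$ at $e$. Give $G\times G$ the product metric $\langle\cdot,\cdot\rangle_1\oplus\langle\cdot,\cdot\rangle_1$, let $\pi:G\times G\to G/H$, $\pi(g_1,g_2)=g_1^{-1}g_2H$, be the quotient by the free isometric action $(g,h)\cdot(g_1,g_2)=(gg_1,gg_2h^{-1})$ of $G\times H$, and let $\langle\cdot,\cdot\rangle_2$ be the metric on $G/H$ making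 $\pi$ a Riemannian submersion. Let $\mathcal F\subseteq G$ be the set of matrices $$\begin{pmatrix} \cos\theta & \sin\theta & 0 &0 & 0 & 0 & 0 \\ -\cos\phi \sin\theta & \cos\phi \cos\theta & 0 & -\sin\phi & 0 & 0 & 0\\ 0 & 0 & \cos\phi & 0 & -\sin\phi \cos\theta & -\sin\phi \sin\theta & 0 \\ -\sin \phi \sin \theta & \sin\phi \cos\theta & 0 & \cos\phi & 0 & 0 & 0\\ 0 & 0 & \sin\phi & 0 & \cos\phi \cos\theta & \cos\phi \sin\theta & 0 \\ 0 & 0 & 0 & 0 & -\sin\theta & \cos\theta & 0 \\ 0 & 0 & 0 &0 & 0 & 0 & 1 \end{pmatrix},\quad 0\le\theta,\phi\le\pi/2.$$ *)

From Stdlib Require Import Reals Lra ClassicalEpsilon.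
Open Scope R_scope.

Definition Mat := nat -> nat -> R.
Definition sum7 (f : nat -> R) : R := sum_f_R0 f 6.
Definition mmul (A B : Mat) : Mat := fun i j => sum7 (fun k => A i k * B k j).
Definition trans (A : Mat) : Mat := fun i j => A j i.
Definition ident : Mat := fun i j => if Nat.eqb i j then 1 else 0.
Definition zeroM : Mat := fun _ _ => 0.
Definition madd (A B : Mat) : Mat := fun i j => A i j + B i j.
Definition msub (A B : Mat) : Mat := fun i j => A i j - B i j.
Definition mscal (a : R) (A : Mat) : Mat := fun i j => a * A i j.
Definition mtr (A : Mat) : R := sum7 (fun i => A i i).
Definition mat_eq7 (A B : Mat) : Prop :=
  forall i j, (i < 7)%nat -> (j < 7)%nat -> A i j = B i j.

Record quat := mkQ { q0 : R; q1 : R; q2 : R; q3 : R }.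
Definition qmul (a b : quat) : quat :=
  mkQ (q0 a * q0 b - q1 a * q1 b - q2 a * q2 b - q3 a * q3 b)
      (q0 a * q1 b + q1 a * q0 b + q2 a * q3 b - q3 a * q2 b)
      (q0 a * q2 b - q1 a * q3 b + q2 a * q0 b + q3 a * q1 b)
      (q0 a * q3 b + q1 a * q2 b - q2 a * q1 b + q3 a * q0 b).
Definition qconj (a : quat) : quat := mkQ (q0 a) (- q1 a) (- q2 a) (- q3 a).
Definition qadd (a b : quat) : quat :=
  mkQ (q0 a + q0 b) (q1 a + q1 b) (q2 a + q2 b) (q3 a + q3 b).
Definition qsub (a b : quat) : quat :=
  mkQ (q0 a - q0 b) (q1 a - q1 b) (q2 a - q2 b) (q3 a - q3 b).

(* the octonion a + b l *)
Record oct := mkO { oa : quat; ob : quat }.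
(* (a + b l)(c + d l) = (ac - conj(d) b) + (d a + b conj(c)) l *)
Definition omul (x y : oct) : oct :=
  mkO (qsub (qmul (oa x) (oa y)) (qmul (qconj (ob y)) (ob x)))
      (qadd (qmul (ob y) (oa x)) (qmul (ob x) (qconj (oa y)))).
Definition oadd (x y : oct) : oct := mkO (qadd (oa x) (oa y)) (qadd (ob x) (ob y)).

(* coordinates in the basis (1, i, j, k, l, il, jl, kl); note il = (0,i) etc. *)
Definition ocoord (x : oct) (n : nat) : R :=
  match n with
  | 0 => q0 (oa x) | 1 => q1 (oa x) | 2 => q2 (oa x) | 3 => q3 (oa x)
  | 4 => q0 (ob x) | 5 => q1 (ob x) | 6 => q2 (ob x) | 7 => q3 (ob x)
  | _ => 0 end.
Definition of_coords (v : nat -> R) : oct :=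
  mkO (mkQ (v 0%nat) (v 1%nat) (v 2%nat) (v 3%nat))
      (mkQ (v 4%nat) (v 5%nat) (v 6%nat) (v 7%nat)).

(* A 7x7 matrix g acts on Im O in the ordered basis (i,j,k,l,il,jl,kl)
   (column c = image of the c-th basis vector); extended by 1 on Re O. *)
Definition oact (g : Mat) (x : oct) : oct :=
  of_coords (fun n => match n with
                      | 0 => ocoord x 0
                      | S r => sum7 (fun c => g r c * ocoord x (S c)) end).
(* infinitesimal version: extended by 0 on Re O *)
Definition dact (X : Mat) (x : oct) : oct :=
  of_coords (fun n => match n with
                      | 0 => 0
                      | S r => sum7 (fun c => X r c * ocoord x (S c)) end).

Definition inG (g : Mat) : Prop :=
  (exists h : Mat, mat_eq7 (mmul g h) ident /\ mat_eq7 (mmul h g) ident) /\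
  (forall x y : oct, oact g (omul x y) = omul (oact g x) (oact g y)).

(* K = { g in G : g(i) = i }  (i = basis vector 0 of Im O) *)
Definition inK (g : Mat) : Prop :=
  inG g /\ forall r, (r < 7)%nat -> g r 0%nat = ident r 0%nat.

(* H = { g in G : g preserves the oriented plane with oriented basis (j,k) }
   (j,k = basis vectors 1,2 of Im O) *)
Definition inH (g : Mat) : Prop :=
  inG g /\
  (forall r, (r < 7)%nat -> r <> 1%nat -> r <> 2%nat ->
     g r 1%nat = 0 /\ g r 2%nat = 0) /\
  g 1%nat 1%nat * g 2%nat 2%nat - g 2%nat 1%nat * g 1%nat 2%nat > 0.

Definition in_g (X : Mat) : Prop :=
  forall x y : oct, dact X (omul x y) = oadd (omul (dact X x) y) (omul x (dact X y)).
Definition in_k (X : Mat) : Prop :=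
  in_g X /\ forall r, (r < 7)%nat -> X r 0%nat = 0.

Definition ip0 (X Y : Mat) : R := - mtr (mmul X Y).

(* Y_k : orthogonal projection (w.r.t. <.,.>_0) of Y onto k; Y_p = Y - Y_k *)
Definition kproj (Y : Mat) : Mat :=
  epsilon (inhabits zeroM)
    (fun Z => in_k Z /\ forall W, in_k W -> ip0 (msub Y Z) W = 0).

Definition phi (t : R) (Y : Mat) : Mat :=
  madd (mscal (t / (t + 1)) (kproj Y)) (msub Y (kproj Y)).
Definition ip1 (t : R) (X Y : Mat) : R := ip0 X (phi t Y).

Definition curveG (c dc : R -> Mat) : Prop :=
  forall s, 0 <= s <= 1 ->
    inG (c s) /\
    forall i j, (i < 7)%nat -> (j < 7)%nat ->
      derivable_pt_lim (fun u => c u i j) s (dc s i j).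

(* speed of (c1,c2) for the left-invariant product metric:
   velocity left-translated to e is c(s)^{-1} c'(s) = c(s)^T c'(s) *)
Definition speed2 (t : R) (c1 dc1 c2 dc2 : R -> Mat) (s : R) : R :=
  let X1 := mmul (trans (c1 s)) (dc1 s) in
  let X2 := mmul (trans (c2 s)) (dc2 s) in
  sqrt (ip1 t X1 X1 + ip1 t X2 X2).

Definition has_length (t : R) (c1 dc1 c2 dc2 : R -> Mat) (L : R) : Prop :=
  exists pr : Riemann_integrable (speed2 t c1 dc1 c2 dc2) 0 1, RiemannInt pr = L.

(* points of G/H are represented by x in G (meaning the coset xH) *)
Definition cls (x y : Mat) : Prop := inH (mmul (trans x) y).   (* xH = yH *)
(* pi(g1,g2) = g1^{-1} g2 H ; for g1 in G <= SO(7), g1^{-1} = g1^T *)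
Definition piGH (g1 g2 : Mat) : Mat := mmul (trans g1) g2.

(* lengths of curves in G x G joining the fibres pi^{-1}(xH) and pi^{-1}(yH);
   the Riemannian-submersion distance of <.,.>_2 is their infimum *)
Definition lengths_between (t : R) (x y : Mat) (L : R) : Prop :=
  exists c1 dc1 c2 dc2,
    curveG c1 dc1 /\ curveG c2 dc2 /\
    cls (piGH (c1 0) (c2 0)) x /\ cls (piGH (c1 1) (c2 1)) y /\
    has_length t c1 dc1 c2 dc2 L.

Definition is_glb (E : R -> Prop) (m : R) : Prop :=
  (forall z, E z -> m <= z) /\ (forall b, (forall z, E z -> b <= z) -> b <= m).

Definition dist2 (t : R) (x y : Mat) (d : R) : Prop :=
  is_glb (lengths_between t x y) d.

Definition isometryGH (t : R) (f : Mat -> Mat) : Prop :=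
  (forall x, inG x -> inG (f x)) /\
  (forall x y, inG x -> inG y -> cls x y -> cls (f x) (f y)) /\
  (forall y, inG y -> exists x, inG x /\ cls (f x) y) /\
  (forall x y d, inG x -> inG y -> (dist2 t x y d <-> dist2 t (f x) (f y) d)).

Definition Fmat (th ph : R) : Mat := fun i j =>
  let c := cos th in let s := sin th in let cp := cos ph in let sp := sin ph in
  match i, j with
  | 0%nat, 0%nat => c
  | 0%nat, 1%nat => s
  | 1%nat, 0%nat => - cp * s
  | 1%nat, 1%nat => cp * c
  | 1%nat, 3%nat => - sp
  | 2%nat, 2%nat => cp
  | 2%nat, 4%nat => - sp * c
  | 2%nat, 5%nat => - sp * s
  | 3%nat, 0%nat => - sp * s
  | 3%nat, 1%nat => sp * c
  | 3%nat, 3%nat => cp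
  | 4%nat, 2%nat => sp
  | 4%nat, 4%nat => cp * c
  | 4%nat, 5%nat => cp * s
  | 5%nat, 4%nat => - s
  | 5%nat, 5%nat => c
  | 6%nat, 6%nat => 1
  | _, _ => 0
  end.

Definition inF (g : Mat) : Prop :=
  exists th ph, 0 <= th <= PI / 2 /\ 0 <= ph <= PI / 2 /\ g = Fmat th ph.

From Stdlib Require Import Reals Lra Lia Nsatz Setoid Morphisms FunctionalExtensionality ClassicalEpsilon.
Open Scope R_scope.

(* Let N = { a in G : a(i) = +-i }, the normaliser of K.  Conjugation by a in N preserves k,
   hence the projection Y |-> Y_k and the metric <.,.>_1; so (g1, g2) |-> (g1 a^-1, g2) is an
   isometry of G x G commuting with the action of G x H, and it induces the isometry
   g^-1 H |-> a g^-1 H of G/H.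
   For a point xH put w = x^-1(i).  The subgroup H contains automorphisms rotating span(j, k)
   by any angle and the maps x + y l |-> x + (q y) l for unit quaternions q, so, passing to
   spherical coordinates, h F(th, ph)(i) = +-w for some h in H and th, ph in [0, pi/2].  Then
   b = x h F(th, ph) lies in N, and b^-1 x H = F(th, ph)^-1 h^-1 H = F(th, ph)^-1 H. *)

Ltac case_lt7 i := destruct i as [|[|[|[|[|[|[|i]]]]]]]; [..|exfalso; lia].

Lemma sum7_ext f g : (forall k, (k < 7)%nat -> f k = g k) -> sum7 f = sum7 g.
Proof. intros H. unfold sum7; cbn [sum_f_R0]. rewrite !H by lia. reflexivity. Qed.

Lemma sum7_scal c f : sum7 (fun k => c * f k) = c * sum7 f.
Proof. unfold sum7; cbn [sum_f_R0]. ring. Qed.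

Add Parametric Relation : Mat mat_eq7
  reflexivity proved by (fun A i j _ _ => eq_refl)
  symmetry proved by (fun A B H i j Hi Hj => eq_sym (H i j Hi Hj))
  transitivity proved by (fun A B C H1 H2 i j Hi Hj => eq_trans (H1 i j Hi Hj) (H2 i j Hi Hj))
  as mat_eq7_rel.

#[export] Instance mmul_proper : Proper (mat_eq7 ==> mat_eq7 ==> mat_eq7) mmul.
Proof.
intros A A' HA B B' HB i j Hi Hj. apply sum7_ext. intros k Hk.
rewrite (HA i k), (HB k j) by lia. reflexivity.
Qed.

#[export] Instance trans_proper : Proper (mat_eq7 ==> mat_eq7) trans.
Proof. intros A A' HA i j Hi Hj. exact (HA j i Hj Hi). Qed.

#[export] Instance msub_proper : Proper (mat_eq7 ==> mat_eq7 ==> mat_eq7) msub.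
Proof.
intros A A' HA B B' HB i j Hi Hj. unfold msub. rewrite (HA i j), (HB i j) by lia. reflexivity.
Qed.

#[export] Instance madd_proper : Proper (mat_eq7 ==> mat_eq7 ==> mat_eq7) madd.
Proof.
intros A A' HA B B' HB i j Hi Hj. unfold madd. rewrite (HA i j), (HB i j) by lia. reflexivity.
Qed.

#[export] Instance mscal_proper a : Proper (mat_eq7 ==> mat_eq7) (mscal a).
Proof. intros A A' HA i j Hi Hj. unfold mscal. rewrite (HA i j) by lia. reflexivity. Qed.

#[export] Instance mtr_proper : Proper (mat_eq7 ==> eq) mtr.
Proof. intros A A' HA. apply sum7_ext. intros k Hk. apply HA; lia. Qed.

#[export] Instance ip0_proper : Proper (mat_eq7 ==> mat_eq7 ==> eq) ip0.
Proof. intros X X' HX Y Y' HY. unfold ip0. rewrite HX, HY. reflexivity. Qed.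

Lemma mmul_assoc A B C : mmul (mmul A B) C = mmul A (mmul B C).
Proof. extensionality i; extensionality j. unfold mmul, sum7; cbn [sum_f_R0]. ring. Qed.

Lemma trans_mmul A B : trans (mmul A B) = mmul (trans B) (trans A).
Proof. extensionality i; extensionality j. unfold mmul, trans, sum7; cbn [sum_f_R0]. ring. Qed.

Lemma trans_trans A : trans (trans A) = A.
Proof. reflexivity. Qed.

Lemma mmul1m A : mat_eq7 (mmul ident A) A.
Proof. intros i j Hi Hj. unfold mmul, ident, sum7. case_lt7 i; cbn [sum_f_R0 Nat.eqb]; ring. Qed.

Lemma mmulm1 A : mat_eq7 (mmul A ident) A.
Proof. intros i j Hi Hj. unfold mmul, ident, sum7. case_lt7 j; cbn [sum_f_R0 Nat.eqb]; ring. Qed.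

Lemma trans_ident : trans ident = ident.
Proof.
extensionality i; extensionality j. unfold trans, ident. rewrite Nat.eqb_sym. reflexivity.
Qed.

Lemma mtr_mmulC A B : mtr (mmul A B) = mtr (mmul B A).
Proof. unfold mtr, mmul, sum7; cbn [sum_f_R0]. ring. Qed.

Definition obasis (n : nat) : oct := of_coords (fun m => if Nat.eqb m n then 1 else 0).

Ltac expand_oct := cbv beta iota delta [mmul trans oact dact omul oadd of_coords ocoord
  sum7 qmul qconj qadd qsub sum_f_R0 oa ob q0 q1 q2 q3 obasis Nat.eqb].

Lemma oact_mmul A B x : oact (mmul A B) x = oact A (oact B x).
Proof. destruct x as [[] []]. expand_oct. f_equal; f_equal; ring. Qed.

Lemma oact_ident x : oact ident x = x.
Proof. destruct x as [[] []]. unfold ident. expand_oct. f_equal; f_equal; ring. Qed.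

Lemma oact_oadd A x y : oact A (oadd x y) = oadd (oact A x) (oact A y).
Proof. destruct x as [[] []], y as [[] []]. expand_oct. f_equal; f_equal; ring. Qed.

Lemma ocoord_oact_obasis A i j : (i < 7)%nat -> (j < 7)%nat ->
  ocoord (oact A (obasis (S j))) (S i) = A i j.
Proof. intros Hi Hj. case_lt7 i; case_lt7 j; expand_oct; ring. Qed.

#[export] Instance oact_proper : Proper (mat_eq7 ==> eq ==> eq) oact.
Proof.
intros A B E x _ <-. unfold oact, of_coords.
f_equal; f_equal; apply sum7_ext; intros k Hk; rewrite (E _ k) by lia; reflexivity.
Qed.

Lemma oact_re A x : ocoord (oact A x) 0 = ocoord x 0.
Proof. reflexivity. Qed.

Lemma ocoord_omul_re x y :
  ocoord (omul x y) 0 = ocoord x 0 * ocoord y 0 - sum7 (fun n => ocoord x (S n) * ocoord y (S n)).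
Proof. destruct x as [[] []], y as [[] []]. unfold sum7; cbn. ring. Qed.

Definition autom (g : Mat) : Prop :=
  forall x y : oct, oact g (omul x y) = omul (oact g x) (oact g y).

(* Automorphisms preserve Re(e_i e_j) = -delta_ij, so they are orthogonal. *)
Lemma autom_orth g : autom g -> mat_eq7 (mmul (trans g) g) ident.
Proof.
intros Hg i j Hi Hj.
pose proof (f_equal (fun o => ocoord o 0) (Hg (obasis (S i)) (obasis (S j)))) as H; cbv beta in H.
rewrite oact_re, !ocoord_omul_re, !oact_re in H.
replace (sum7 (fun n =>
    ocoord (oact g (obasis (S i))) (S n) * ocoord (oact g (obasis (S j))) (S n)))
  with (mmul (trans g) g i j) in H
  by (apply sum7_ext; intros k Hk; rewrite !ocoord_oact_obasis by auto; reflexivity).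
unfold obasis, ident in *. case_lt7 i; case_lt7 j; cbv in H |- *; lra.
Qed.

Lemma inG_autom g : inG g -> autom g.
Proof. intros [_ H]; exact H. Qed.

Lemma inG_orth g : inG g ->
  mat_eq7 (mmul (trans g) g) ident /\ mat_eq7 (mmul g (trans g)) ident.
Proof.
intros [[h [H1 H2]] Ha]. pose proof (autom_orth g Ha) as Ho. split; [exact Ho|].
assert (Hh : mat_eq7 (trans g) h).
{ rewrite <- (mmulm1 (trans g)), <- H1, <- mmul_assoc, Ho. apply mmul1m. }
rewrite Hh. exact H1.
Qed.

Lemma inG_of_orth g : autom g -> mat_eq7 (mmul g (trans g)) ident -> inG g.
Proof.
intros Ha Ho. split; [|exact Ha]. exists (trans g). split; [exact Ho | apply autom_orth, Ha].
Qed.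

#[export] Instance inG_proper : Proper (mat_eq7 ==> iff) inG.
Proof.
intros A B E. split; intros [[h [H1 H2]] Ha]; split.
- exists h. rewrite <- E. auto.
- intros x y. rewrite <- !E. apply Ha.
- exists h. rewrite E. auto.
- intros x y. rewrite !E. apply Ha.
Qed.

Lemma orth_cancel_l a Z : mat_eq7 (mmul a (trans a)) ident ->
  mat_eq7 (mmul a (mmul (trans a) Z)) Z.
Proof. intros H. rewrite <- mmul_assoc, H. apply mmul1m. Qed.

Lemma inG_ident : inG ident.
Proof.
apply inG_of_orth; [intros x y; rewrite !oact_ident; reflexivity|].
rewrite trans_ident. apply mmul1m.
Qed.

Lemma inG_mmul A B : inG A -> inG B -> inG (mmul A B).
Proof.
intros HA HB. apply inG_of_orth.
- intros x y. rewrite !oact_mmul, (inG_autom B HB), (inG_autom A HA). reflexivity.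
- rewrite trans_mmul, mmul_assoc, orth_cancel_l by apply inG_orth, HB. apply inG_orth, HA.
Qed.

Lemma inG_trans g : inG g -> inG (trans g).
Proof.
intros Hg. destruct (inG_orth g Hg) as [H1 H2].
assert (Hcancel : forall z, oact g (oact (trans g) z) = z).
{ intros z. rewrite <- oact_mmul, H2. apply oact_ident. }
apply inG_of_orth; [|exact H1].
intros x y. rewrite <- (oact_ident (omul (oact _ x) _)), <- H1, oact_mmul.
rewrite (inG_autom g Hg), !Hcancel. reflexivity.
Qed.

#[export] Instance inH_proper : Proper (mat_eq7 ==> iff) inH.
Proof.
intros A B E. unfold inH.
rewrite (E 1%nat 1%nat), (E 2%nat 2%nat), (E 2%nat 1%nat), (E 1%nat 2%nat), E by lia.
split; intros [HG [Hc Hd]]; (split; [exact HG|split; [|exact Hd]]);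
  intros r Hr H1 H2; [rewrite <- (E r 1%nat), <- (E r 2%nat) | rewrite (E r 1%nat), (E r 2%nat)];
  auto; lia.
Qed.

#[export] Instance cls_proper : Proper (mat_eq7 ==> mat_eq7 ==> iff) cls.
Proof. intros x x' Ex y y' Ey. unfold cls. rewrite Ex, Ey. reflexivity. Qed.

Lemma inH_ident : inH ident.
Proof.
split; [apply inG_ident|split].
- intros r Hr H1 H2. unfold ident. case_lt7 r; cbn; try lia; split; reflexivity.
- unfold ident; cbn. lra.
Qed.

Definition kmat (u1 u2 u3 u4 u5 u6 u7 u8 : R) : Mat := fun i j =>
  match i, j with
  | 1%nat,2%nat => u3 - u8 | 1%nat,3%nat => - u2 | 1%nat,4%nat => - u1 | 1%nat,5%nat => u5 | 1%nat,6%nat => - u4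
  | 2%nat,1%nat => u8 - u3 | 2%nat,3%nat => u1 | 2%nat,4%nat => - u2 | 2%nat,5%nat => - u4 | 2%nat,6%nat => - u5
  | 3%nat,1%nat => u2 | 3%nat,2%nat => - u1 | 3%nat,4%nat => - u3 | 3%nat,5%nat => u7 | 3%nat,6%nat => - u6
  | 4%nat,1%nat => u1 | 4%nat,2%nat => u2 | 4%nat,3%nat => u3 | 4%nat,5%nat => - u6 | 4%nat,6%nat => - u7
  | 5%nat,1%nat => - u5 | 5%nat,2%nat => u4 | 5%nat,3%nat => - u7 | 5%nat,4%nat => u6 | 5%nat,6%nat => - u8
  | 6%nat,1%nat => u4 | 6%nat,2%nat => u5 | 6%nat,3%nat => u6 | 6%nat,4%nat => u7 | 6%nat,5%nat => u8
  | _, _ => 0 end.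

Lemma in_k_kmat u1 u2 u3 u4 u5 u6 u7 u8 : in_k (kmat u1 u2 u3 u4 u5 u6 u7 u8).
Proof.
split.
- intros [[] []] [[] []]. unfold kmat. expand_oct. f_equal; f_equal; ring.
- intros r Hr. case_lt7 r; reflexivity.
Qed.

(* The Leibniz rule on ij, il, i(jl), jl, j^2 and l^2 already forces this shape. *)
Lemma in_k_kmat_coords W : in_k W ->
  mat_eq7 W (kmat (W 4 1)%nat (W 4 2)%nat (W 4 3)%nat (W 6 1)%nat (W 6 2)%nat
                  (W 6 3)%nat (W 6 4)%nat (W 6 5)%nat).
Proof.
intros [Hg H0].
pose proof (Hg (obasis 1) (obasis 2)) as E1. pose proof (Hg (obasis 1) (obasis 4)) as E2.
pose proof (Hg (obasis 1) (obasis 6)) as E3. pose proof (Hg (obasis 2) (obasis 4)) as E4.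
pose proof (Hg (obasis 2) (obasis 2)) as E5. pose proof (Hg (obasis 4) (obasis 4)) as E6.
clear Hg. revert E1 E2 E3 E4 E5 E6. expand_oct.
intros E1 E2 E3 E4 E5 E6.
injection E1; injection E2; injection E3; injection E4; injection E5; injection E6; intros.
pose proof (H0 0%nat ltac:(lia)). pose proof (H0 1%nat ltac:(lia)). pose proof (H0 2%nat ltac:(lia)).
pose proof (H0 3%nat ltac:(lia)). pose proof (H0 4%nat ltac:(lia)). pose proof (H0 5%nat ltac:(lia)).
pose proof (H0 6%nat ltac:(lia)).
clear E1 E2 E3 E4 E5 E6 H0.
intros i j Hi Hj. unfold kmat. case_lt7 i; case_lt7 j; lra.
Qed.

Definition is_kproj (Y Z : Mat) : Prop :=
  in_k Z /\ forall W, in_k W -> ip0 (msub Y Z) W = 0.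

Definition kbasis (n : nat) : Mat :=
  let e m := if Nat.eqb n m then 1 else 0 in
  kmat (e 1%nat) (e 2%nat) (e 3%nat) (e 4%nat) (e 5%nat) (e 6%nat) (e 7%nat) (e 8%nat).

(* The basis [kbasis 1], ..., [kbasis 8] of k is ip0-orthogonal with squared norms 4,
   except that ip0 (kbasis 3) (kbasis 8) = -2; inverting this Gram matrix gives: *)
Definition kproj0 (Y : Mat) : Mat :=
  let L n := ip0 Y (kbasis n) in
  kmat (L 1%nat / 4) (L 2%nat / 4) ((2 * L 3%nat + L 8%nat) / 6) (L 4%nat / 4)
       (L 5%nat / 4) (L 6%nat / 4) (L 7%nat / 4) ((L 3%nat + 2 * L 8%nat) / 6).

Ltac expand_ip0 := cbv beta iota zeta delta
  [ip0 mtr mmul msub madd mscal trans sum7 sum_f_R0 kmat kbasis kproj0 Nat.eqb].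

Lemma kproj0_orth Y w1 w2 w3 w4 w5 w6 w7 w8 :
  ip0 (msub Y (kproj0 Y)) (kmat w1 w2 w3 w4 w5 w6 w7 w8) = 0.
Proof. expand_ip0. field. Qed.

Lemma kproj0_is_kproj Y : is_kproj Y (kproj0 Y).
Proof.
split; [apply in_k_kmat|]. intros W HW. rewrite (in_k_kmat_coords W HW). apply kproj0_orth.
Qed.

Lemma is_kproj_kproj0 Y Z : is_kproj Y Z -> mat_eq7 Z (kproj0 Y).
Proof.
intros [HZ HO].
pose proof (HO _ (in_k_kmat 1 0 0 0 0 0 0 0)) as H1. pose proof (HO _ (in_k_kmat 0 1 0 0 0 0 0 0)) as H2.
pose proof (HO _ (in_k_kmat 0 0 1 0 0 0 0 0)) as H3. pose proof (HO _ (in_k_kmat 0 0 0 1 0 0 0 0)) as H4.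
pose proof (HO _ (in_k_kmat 0 0 0 0 1 0 0 0)) as H5. pose proof (HO _ (in_k_kmat 0 0 0 0 0 1 0 0)) as H6.
pose proof (HO _ (in_k_kmat 0 0 0 0 0 0 1 0)) as H7. pose proof (HO _ (in_k_kmat 0 0 0 0 0 0 0 1)) as H8.
rewrite (in_k_kmat_coords Z HZ) in H1, H2, H3, H4, H5, H6, H7, H8 |- *.
clear HO HZ.
set (z1 := Z 4%nat 1%nat) in *. set (z2 := Z 4%nat 2%nat) in *. set (z3 := Z 4%nat 3%nat) in *.
set (z4 := Z 6%nat 1%nat) in *. set (z5 := Z 6%nat 2%nat) in *. set (z6 := Z 6%nat 3%nat) in *.
set (z7 := Z 6%nat 4%nat) in *. set (z8 := Z 6%nat 5%nat) in *.
clearbody z1 z2 z3 z4 z5 z6 z7 z8.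
revert H1 H2 H3 H4 H5 H6 H7 H8. expand_ip0. intros H1 H2 H3 H4 H5 H6 H7 H8 i j Hi Hj.
case_lt7 i; case_lt7 j; cbv beta iota; lra.
Qed.

Lemma kproj_is_kproj Y : is_kproj Y (kproj Y).
Proof.
apply (epsilon_spec (inhabits zeroM) (is_kproj Y)). exists (kproj0 Y). apply kproj0_is_kproj.
Qed.

Lemma is_kproj_kproj Y Z : is_kproj Y Z -> mat_eq7 Z (kproj Y).
Proof.
intros H. rewrite (is_kproj_kproj0 Y Z H). symmetry. apply is_kproj_kproj0, kproj_is_kproj.
Qed.

Definition inNK (a : Mat) : Prop :=
  inG a /\ exists sg, sg * sg = 1 /\ forall k, (k < 7)%nat -> a k 0%nat = sg * ident k 0%nat.

Lemma inNK_trans a : inNK a -> inNK (trans a).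
Proof.
intros [Ha [sg [Hsg Hcol]]]. split; [apply inG_trans, Ha|]. exists sg. split; [exact Hsg|].
intros k Hk. unfold trans.
pose proof (proj1 (inG_orth a Ha) k 0%nat Hk ltac:(lia)) as E.
unfold mmul, trans in E. rewrite (sum7_ext _ (fun j => a j k * (sg * ident j 0%nat))) in E
  by (intros j Hj; rewrite Hcol by exact Hj; reflexivity).
unfold sum7, ident in E |- *. cbn [sum_f_R0 Nat.eqb] in E.
replace (a 0%nat k) with (sg * sg * a 0%nat k) by (rewrite Hsg; ring). nra.
Qed.

Definition cnj (a X : Mat) : Mat := mmul a (mmul X (trans a)).

Lemma cnj_msub a X Y : cnj a (msub X Y) = msub (cnj a X) (cnj a Y).
Proof.
extensionality i; extensionality j. unfold cnj, msub, mmul, trans, sum7; cbn [sum_f_R0]. ring.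
Qed.

Lemma cnjK a X : mat_eq7 (mmul a (trans a)) ident -> mat_eq7 (cnj a (cnj (trans a) X)) X.
Proof.
intros H. unfold cnj. rewrite trans_trans, !mmul_assoc, orth_cancel_l, H by exact H. apply mmulm1.
Qed.

Lemma ip0_cnj a X Y : mat_eq7 (mmul (trans a) a) ident -> ip0 (cnj a X) (cnj a Y) = ip0 X Y.
Proof.
intros Ho. unfold ip0, cnj. f_equal.
rewrite !mmul_assoc, mtr_mmulC, !mmul_assoc, <- (mmul_assoc (trans a) a), Ho, mmul1m, mmulm1.
reflexivity.
Qed.

Lemma dact_mmul_l A B z : dact (mmul A B) z = oact A (dact B z).
Proof. destruct z as [[] []]. expand_oct. f_equal; f_equal; ring. Qed.

Lemma dact_mmul_r A B z : dact (mmul A B) z = dact A (oact B z).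
Proof. destruct z as [[] []]. expand_oct. f_equal; f_equal; ring. Qed.

Lemma dact_cnj a W z : dact (cnj a W) z = oact a (dact W (oact (trans a) z)).
Proof. unfold cnj. rewrite dact_mmul_l, dact_mmul_r. reflexivity. Qed.

Lemma in_k_cnj a W : inNK a -> in_k W -> in_k (cnj a W).
Proof.
intros HaN [Hg H0]. destruct (inNK_trans a HaN) as [HaT [sg [_ Hrow]]].
destruct HaN as [Ha _]. split.
- intros x y. destruct (inG_orth a Ha) as [_ Ho].
  assert (Hcancel : forall z, oact a (oact (trans a) z) = z).
  { intros z. rewrite <- oact_mmul, Ho. apply oact_ident. }
  rewrite !dact_cnj, (inG_autom _ HaT), Hg, oact_oadd, !(inG_autom _ Ha), !Hcancel.
  reflexivity.
- intros r Hr. unfold cnj, mmul at 1. transitivity (sum7 (fun _ => 0)); [|unfold sum7; cbn; ring].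
  apply sum7_ext. intros i Hi. unfold mmul.
  rewrite (sum7_ext _ (fun j => W i j * (sg * ident j 0%nat)))
    by (intros j Hj; rewrite Hrow by exact Hj; reflexivity).
  unfold sum7, ident. cbn [sum_f_R0 Nat.eqb]. rewrite H0 by exact Hi. ring.
Qed.

Lemma kproj_cnj a Y : inNK a -> mat_eq7 (kproj (cnj a Y)) (cnj a (kproj Y)).
Proof.
intros HaN. destruct (inG_orth a (proj1 HaN)) as [Ho1 Ho2].
destruct (kproj_is_kproj Y) as [Hk Horth].
symmetry. apply is_kproj_kproj. split; [apply in_k_cnj; assumption|].
intros W HW. rewrite <- cnj_msub, <- (cnjK a W Ho2), ip0_cnj by exact Ho1.
apply Horth, in_k_cnj; [apply inNK_trans|]; assumption.
Qed.

Lemma phi_cnj t a Y : inNK a -> mat_eq7 (phi t (cnj a Y)) (cnj a (phi t Y)).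
Proof.
intros HaN. unfold phi. rewrite kproj_cnj by exact HaN.
intros i j _ _. unfold madd, mscal, msub, cnj, mmul, trans, sum7; cbn [sum_f_R0]. ring.
Qed.

Lemma ip1_cnj t a X Y : inNK a -> ip1 t (cnj a X) (cnj a Y) = ip1 t X Y.
Proof.
intros HaN. unfold ip1. rewrite phi_cnj by exact HaN.
apply ip0_cnj, (inG_orth a (proj1 HaN)).
Qed.

Lemma derivable_pt_lim_mmul_r (c : R -> Mat) (dc b : Mat) s :
  (forall i j, (i < 7)%nat -> (j < 7)%nat -> derivable_pt_lim (fun u => c u i j) s (dc i j)) ->
  forall i j, (i < 7)%nat -> (j < 7)%nat ->
    derivable_pt_lim (fun u => mmul (c u) b i j) s (mmul dc b i j).
Proof.
intros H i j Hi Hj.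
assert (Hk : forall k, (k < 7)%nat ->
  derivable_pt_lim (fun u => c u i k * b k j) s (dc i k * b k j)).
{ intros k Hk. replace (dc i k * b k j) with (dc i k * b k j + c s i k * 0) by ring.
  apply (derivable_pt_lim_mult (fun u => c u i k) (fun _ => b k j));
    [apply H; assumption | apply derivable_pt_lim_const]. }
unfold mmul, sum7; cbn [sum_f_R0].
repeat apply (derivable_pt_lim_plus (fun u => _) (fun u => _)); apply Hk; lia.
Qed.

Lemma curveG_mmul_r b c dc : inG b -> curveG c dc ->
  curveG (fun s => mmul (c s) b) (fun s => mmul (dc s) b).
Proof.
intros Hb Hc s Hs. destruct (Hc s Hs) as [HG HD]. split.
- apply inG_mmul; assumption.
- apply derivable_pt_lim_mmul_r. exact HD.
Qed.

Lemma speed2_mmul_r t b c1 dc1 c2 dc2 : inNK (trans b) ->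
  speed2 t (fun s => mmul (c1 s) b) (fun s => mmul (dc1 s) b) c2 dc2 = speed2 t c1 dc1 c2 dc2.
Proof.
intros Hb. extensionality s. unfold speed2.
replace (mmul (trans (mmul (c1 s) b)) (mmul (dc1 s) b))
  with (cnj (trans b) (mmul (trans (c1 s)) (dc1 s)))
  by (unfold cnj; rewrite trans_mmul, trans_trans, !mmul_assoc; reflexivity).
rewrite ip1_cnj by exact Hb. reflexivity.
Qed.

Lemma cls_lmul a p x : mat_eq7 (mmul (trans a) a) ident -> cls p x -> cls (mmul a p) (mmul a x).
Proof.
intros Ho. unfold cls.
rewrite trans_mmul, mmul_assoc, <- (mmul_assoc (trans a) a), Ho, mmul1m. auto.
Qed.

#[export] Instance lengths_between_proper t :
  Proper (mat_eq7 ==> mat_eq7 ==> eq ==> iff) (lengths_between t).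
Proof.
intros x x' Ex y y' Ey L _ <-. unfold lengths_between.
setoid_rewrite Ex. setoid_rewrite Ey. reflexivity.
Qed.

Lemma lengths_between_lmul t a x y L : inNK a ->
  lengths_between t x y L -> lengths_between t (mmul a x) (mmul a y) L.
Proof.
intros Ha (c1 & dc1 & c2 & dc2 & Hc1 & Hc2 & H0 & H1 & HL).
pose proof (proj1 (inG_orth a (proj1 Ha))) as Ho.
exists (fun s => mmul (c1 s) (trans a)), (fun s => mmul (dc1 s) (trans a)), c2, dc2.
unfold piGH in *. rewrite !trans_mmul, trans_trans, !mmul_assoc.
split; [apply curveG_mmul_r; [apply inG_trans, Ha | exact Hc1]|].
split; [exact Hc2|].
split; [apply cls_lmul; assumption|]. split; [apply cls_lmul; assumption|].
unfold has_length. rewrite speed2_mmul_r by (rewrite trans_trans; exact Ha). exact HL.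
Qed.

Lemma lengths_between_lmul_iff t a x y L : inNK a ->
  lengths_between t (mmul a x) (mmul a y) L <-> lengths_between t x y L.
Proof.
intros Ha. split; [|apply lengths_between_lmul; exact Ha].
intros H. apply (lengths_between_lmul t (trans a)) in H; [|apply inNK_trans, Ha].
pose proof (proj1 (inG_orth a (proj1 Ha))) as Ho.
rewrite <- !mmul_assoc, Ho, !mmul1m in H. exact H.
Qed.

Lemma is_glb_ext E E' m : (forall z, E z <-> E' z) -> is_glb E m <-> is_glb E' m.
Proof. unfold is_glb. intros H. split; intros [Hlow Hgreat]; split; firstorder. Qed.

Lemma isometryGH_lmul t a : inNK a -> isometryGH t (mmul a).
Proof.
intros Ha. destruct (inG_orth a (proj1 Ha)) as [Ho1 Ho2]. split; [|split; [|split]].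
- intros x Hx. apply inG_mmul; [apply Ha | exact Hx].
- intros x y _ _. apply cls_lmul, Ho1.
- intros y Hy. exists (mmul (trans a) y).
  split; [apply inG_mmul; [apply inG_trans, Ha | exact Hy]|].
  unfold cls. rewrite <- mmul_assoc, Ho2, mmul1m, (proj1 (inG_orth y Hy)). apply inH_ident.
- intros x y d _ _. apply is_glb_ext. intros L. symmetry. apply lengths_between_lmul_iff, Ha.
Qed.

Lemma sum_f_R0_sq_eq0 (b : nat -> R) n :
  sum_f_R0 (fun i => b i * b i) n = 0 -> forall i, (i <= n)%nat -> b i = 0.
Proof.
induction n as [|n IH]; cbn [sum_f_R0]; intros H i Hi.
- replace i with 0%nat by lia. nra.
- assert (H0 : 0 <= sum_f_R0 (fun i => b i * b i) n) by (apply cond_pos_sum; intros; nra).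
  destruct (Nat.eq_dec i (S n)) as [->|Hne]; [nra|].
  apply IH; [nra|lia].
Qed.

Lemma vec_polar (b : nat -> R) n : exists u : nat -> R,
  sum_f_R0 (fun i => u i * u i) n = 1 /\
  forall i, (i <= n)%nat -> b i = sqrt (sum_f_R0 (fun i => b i * b i) n) * u i.
Proof.
set (S := sum_f_R0 (fun i => b i * b i) n).
assert (HS : 0 <= S) by (apply cond_pos_sum; intros; nra).
destruct (Req_dec S 0) as [Z|NZ].
- exists (fun i => if Nat.eqb i 0 then 1 else 0). split.
  + clear. induction n as [|n IH]; cbn [sum_f_R0 Nat.eqb] in *; lra.
  + intros i Hi. rewrite Z, sqrt_0, Rmult_0_l. apply (sum_f_R0_sq_eq0 b n Z i Hi).
- assert (Hsq : 0 < sqrt S) by (apply sqrt_lt_R0; lra).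
  exists (fun i => b i / sqrt S). split.
  + assert (HSS : sqrt S * sqrt S = S) by (apply sqrt_sqrt; lra).
    rewrite (sum_eq _ (fun i => b i * b i * / S)) by
      (intros i _; rewrite <- HSS at 3; field; lra).
    rewrite <- scal_sum. fold S. field. exact NZ.
  + intros i _. field. lra.
Qed.

Lemma acos_le_PI2 c : 0 <= c <= 1 -> acos c <= PI / 2.
Proof.
intros Hc. destruct (Rle_dec (acos c) (PI / 2)) as [H|H]; [exact H|].
pose proof (acos_bound c). pose proof PI_RGT_0.
assert (cos (acos c) < 0) by (apply cos_lt_0; lra).
rewrite cos_acos in *; lra.
Qed.

Lemma quarter_circle_angle cp sp : cp * cp + sp * sp = 1 -> 0 <= cp -> 0 <= sp ->
  exists ph, 0 <= ph <= PI / 2 /\ cos ph = cp /\ sin ph = sp.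
Proof.
intros H Hc Hs. assert (Hc1 : cp <= 1) by nra.
exists (acos cp). split; [split; [apply acos_bound | apply acos_le_PI2; lra]|].
split; [apply cos_acos; lra|].
rewrite sin_acos by lra. unfold Rsqr. replace (1 - cp * cp) with (sp * sp) by lra.
apply sqrt_square, Hs.
Qed.

Lemma spherical_angles c r m : 0 <= c -> 0 <= r -> 0 <= m -> c * c + r * r + m * m = 1 ->
  exists th ph, 0 <= th <= PI / 2 /\ 0 <= ph <= PI / 2 /\
    cos th = c /\ cos ph * sin th = r /\ sin ph * sin th = m.
Proof.
intros Hc Hr Hm H.
set (s := sqrt (r * r + m * m)).
assert (Hs0 : 0 <= s) by apply sqrt_pos.
assert (Hs : s * s = r * r + m * m) by (apply sqrt_sqrt; nra).
destruct (quarter_circle_angle c s) as (th & Hth & Hcth & Hsth); [lra|assumption|assumption|].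
destruct (Req_dec s 0) as [Z|NZ].
- exists th, 0. rewrite cos_0, sin_0, Hsth, Z.
  assert (r = 0) by nra. assert (m = 0) by nra.
  repeat split; try lra; pose proof PI_RGT_0; lra.
- destruct (quarter_circle_angle (r / s) (m / s)) as (ph & Hph & Hcph & Hsph).
  + transitivity ((r * r + m * m) / (s * s)); [field; lra | rewrite <- Hs; field; lra].
  + apply Rmult_le_pos; [lra | apply Rlt_le, Rinv_0_lt_compat; lra].
  + apply Rmult_le_pos; [lra | apply Rlt_le, Rinv_0_lt_compat; lra].
  + exists th, ph. rewrite Hcph, Hsph, Hsth. repeat split; try lra; field; lra.
Qed.

Lemma Fmat_inG th ph : inG (Fmat th ph).
Proof.
pose proof (sin2_cos2 th) as E1. pose proof (sin2_cos2 ph) as E2. unfold Rsqr in *.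
unfold Fmat. cbv zeta. revert E1 E2.
generalize (cos th) (sin th) (cos ph) (sin ph). intros c s cp sp E1 E2.
apply inG_of_orth.
- intros [[] []] [[] []]. expand_oct. f_equal; f_equal; nsatz.
- intros i j Hi Hj. unfold ident. case_lt7 i; case_lt7 j; 
  cbv [mmul trans sum7 sum_f_R0 Nat.eqb]; clear Hi Hj; nsatz.
Qed.

Lemma Fmat_col0 th ph j : Fmat th ph j 0%nat =
  match j with
  | 0%nat => cos th | 1%nat => - (cos ph * sin th) | 3%nat => - (sin ph * sin th) | _ => 0
  end.
Proof. destruct j as [|[|[|[|[|[|[|j]]]]]]]; cbv beta iota zeta delta [Fmat]; ring. Qed.

(* For u = cos a, v = sin a, the automorphism x + y l |-> p x p^-1 + (p y p^-1) l
   with p = exp(i a / 2). *)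
Definition rot_jk (u v : R) : Mat := fun i j =>
  match i, j with
  | 1%nat,1%nat => u | 2%nat,1%nat => v | 1%nat,2%nat => -v | 2%nat,2%nat => u
  | 5%nat,5%nat => u | 6%nat,5%nat => v | 5%nat,6%nat => -v | 6%nat,6%nat => u
  | 0%nat,0%nat => 1 | 3%nat,3%nat => 1 | 4%nat,4%nat => 1
  | _,_ => 0 end.

(* The automorphism x + y l |-> x + (q y) l for a unit quaternion q. *)
Definition lquat (q0 q1 q2 q3 : R) : Mat := fun i j =>
  match i, j with
  | 0%nat,0%nat => 1 | 1%nat,1%nat => 1 | 2%nat,2%nat => 1
  | 3%nat,3%nat => q0 | 3%nat,4%nat => -q1 | 3%nat,5%nat => -q2 | 3%nat,6%nat => -q3
  | 4%nat,3%nat => q1 | 4%nat,4%nat => q0 | 4%nat,5%nat => -q3 | 4%nat,6%nat => q2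
  | 5%nat,3%nat => q2 | 5%nat,4%nat => q3 | 5%nat,5%nat => q0 | 5%nat,6%nat => -q1
  | 6%nat,3%nat => q3 | 6%nat,4%nat => -q2 | 6%nat,5%nat => q1 | 6%nat,6%nat => q0
  | _,_ => 0 end.

Lemma rot_jk_inG u v : u * u + v * v = 1 -> inG (rot_jk u v).
Proof.
intros H. apply inG_of_orth.
- intros [[] []] [[] []]. unfold rot_jk. expand_oct. f_equal; f_equal; nsatz.
- intros i j Hi Hj. unfold rot_jk, ident. case_lt7 i; case_lt7 j; 
  cbv [mmul trans sum7 sum_f_R0 Nat.eqb]; clear Hi Hj; nsatz.
Qed.

Lemma lquat_inG q0 q1 q2 q3 :
  q0 * q0 + q1 * q1 + q2 * q2 + q3 * q3 = 1 -> inG (lquat q0 q1 q2 q3).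
Proof.
intros H. apply inG_of_orth.
- intros [[] []] [[] []]. unfold lquat. expand_oct. f_equal; f_equal; nsatz.
- intros i j Hi Hj. unfold lquat, ident. case_lt7 i; case_lt7 j; 
  cbv [mmul trans sum7 sum_f_R0 Nat.eqb]; clear Hi Hj; nsatz.
Qed.

Lemma inH_lquat_rot_jk q0 q1 q2 q3 u v :
  q0 * q0 + q1 * q1 + q2 * q2 + q3 * q3 = 1 -> u * u + v * v = 1 ->
  inH (mmul (lquat q0 q1 q2 q3) (rot_jk u v)).
Proof.
intros Hq Huv. split; [apply inG_mmul; [apply lquat_inG | apply rot_jk_inG]; assumption|]. split.
- intros r Hr H1 H2. case_lt7 r; try lia; cbv [mmul sum7 sum_f_R0 lquat rot_jk]; split; ring.
- cbv [mmul sum7 sum_f_R0 lquat rot_jk]. lra.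
Qed.

Lemma unit_vector_H_orbit_Fmat (w : nat -> R) : sum7 (fun k => w k * w k) = 1 ->
  exists sg th ph h, sg * sg = 1 /\ 0 <= th <= PI / 2 /\ 0 <= ph <= PI / 2 /\ inH h /\
    forall k, (k < 7)%nat -> mmul h (Fmat th ph) k 0%nat = sg * w k.
Proof.
intros Hw.
assert (Hsg : exists sg, sg * sg = 1 /\ 0 <= sg * w 0%nat).
{ destruct (Rle_dec 0 (w 0%nat)); [exists 1 | exists (-1)]; split; lra. }
destruct Hsg as [sg [Hsg Hc]].
destruct (vec_polar (fun i => - sg * w (1 + i)%nat) 1) as (uv & Huv & Hr).
destruct (vec_polar (fun i => - sg * w (3 + i)%nat) 3) as (q & Hq & Hm).
set (r := sqrt _) in Hr. set (m := sqrt _) in Hm.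
assert (Hr2 : r * r = w 1%nat * w 1%nat + w 2%nat * w 2%nat).
{ unfold r. rewrite sqrt_sqrt by (cbn; nra). cbn. nra. }
assert (Hm2 : m * m =
  w 3%nat * w 3%nat + w 4%nat * w 4%nat + w 5%nat * w 5%nat + w 6%nat * w 6%nat).
{ unfold m. rewrite sqrt_sqrt by (cbn; nra). cbn. nra. }
destruct (spherical_angles (sg * w 0%nat) r m) as (th & ph & Hth & Hph & Hcth & Hr' & Hm');
  [exact Hc | apply sqrt_pos | apply sqrt_pos | unfold sum7 in Hw; cbn in Hw; nra|].
exists sg, th, ph,
  (mmul (lquat (q 0%nat) (q 1%nat) (q 2%nat) (q 3%nat)) (rot_jk (uv 0%nat) (uv 1%nat))).
split; [exact Hsg|]. split; [exact Hth|]. split; [exact Hph|].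
split; [apply inH_lquat_rot_jk; cbn in Huv, Hq; lra|].
intros k Hk.
pose proof (Hr 0%nat ltac:(lia)). pose proof (Hr 1%nat ltac:(lia)).
pose proof (Hm 0%nat ltac:(lia)). pose proof (Hm 1%nat ltac:(lia)).
pose proof (Hm 2%nat ltac:(lia)). pose proof (Hm 3%nat ltac:(lia)).
cbn [Nat.add] in *.
case_lt7 k; cbv [sum7 sum_f_R0 mmul lquat rot_jk];
  rewrite !Fmat_col0, Hcth, Hr', Hm'; cbv beta iota; nra.
Qed.

Lemma inNK_mmul_col x Y sg : inG x -> inG Y -> sg * sg = 1 ->
  (forall j, (j < 7)%nat -> Y j 0%nat = sg * x 0%nat j) -> inNK (mmul x Y).
Proof.
intros Hx HY Hsg HcolY. split; [apply inG_mmul; assumption|]. exists sg. split; [exact Hsg|].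
intros k Hk. unfold mmul at 1.
rewrite (sum7_ext _ (fun j => sg * (x k j * trans x j 0%nat)))
  by (intros j Hj; rewrite HcolY by exact Hj; unfold trans; ring).
rewrite sum7_scal. f_equal. apply (proj2 (inG_orth x Hx)); lia.
Qed.

Theorem mainTheorem10 (t : R) (ht : 0 < t) (x : Mat) (hx : inG x) :
  exists f : Mat -> Mat, isometryGH t f /\
    exists g' : Mat, inF g' /\ cls (f x) (piGH g' ident).
Proof.
(* The isometries used work for every t. *)
destruct (inG_orth x hx) as [Hxx Hxx'].
destruct (unit_vector_H_orbit_Fmat (x 0%nat)) as (sg & th & ph & h & Hsg & Hth & Hph & Hh & Hcol).
{ exact (Hxx' 0%nat 0%nat ltac:(lia) ltac:(lia)). }
set (F := Fmat th ph).
assert (HF : inG F) by apply Fmat_inG.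
set (b := mmul x (mmul h F)).
assert (Hb : inNK b).
{ apply (inNK_mmul_col x _ sg); [exact hx | | exact Hsg | exact Hcol].
  apply inG_mmul; [apply Hh | exact HF]. }
exists (mmul (trans b)). split; [apply isometryGH_lmul, inNK_trans, Hb|].
exists F. split; [exists th, ph; auto|].
unfold cls, piGH, b.
rewrite mmulm1, trans_mmul, trans_trans, <- !mmul_assoc, Hxx, mmul1m, !mmul_assoc,
  (proj2 (inG_orth F HF)), mmulm1.
exact Hh.
Qed.
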